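(* Let $X$ be a $T_1$ space and $\mathcal C$ a pre-pseudogroup on $X$. There exist a pseudogroup sheaf $\hat{\mathcal C}$ on $X$ and a morphism $\mathcal C\to\hat{\mathcal C}$ of pre-pseudogroups such that for every pseudogroup sheaf $\mathcal D$ on $X$ and every morphism $\mathcal C\to\mathcal D$ there is a unique morphism $\hat{\mathcal C}\to\mathcal D$ making the triangle $\mathcal C\to\hat{\mathcal C}\to\mathcal D$ commute.
   Context: $X_{top}$ denotes the set of open subsets of $X$, regarded as a category with exactly one morphism $U\to V$ iff $U\subseteq V$. Let $\mathcal C$ be a small category with $\mathrm{Ob}(\mathcal C)=X_{top}$ containing $X_{top}$ as a subcategory (identity on objects). For each open $V$, $\mathcal C(-,V)$ is a presheaf of sets on $X$ (restriction along $U'\subseteq U$ = precomposition with the inclusion morphism). For $x\in X$ let $\mathcal C_x(V)=\operatorname{colim}_{U\ni x}\mathcal C(U,V)$ (germ of $f\in\mathcal C(U,V)$ at $x$ written $f_x$); postcomposition with inclusions makes this functorial in $V$, and for $y\in X$ let $\mathcal C_x^y=\lim_{V\ni y}\mathcal C_x(V)$ (limit over open neighbourhoods of $y$), with projections $\mathcal C_x^y\to\mathcal C_x(V)$. Composition in $\mathcal C$ induces $\mathcal C_y^z\times\mathcal C_x^y\to\mathcal C_x^z$: given $\varphi\in\mathcal C_x^y,\psi\in\mathcal C_y^z$ and open $W\ni z$, choose $g\in\mathcal C(V,W)$, $y\in V$, representing the component $\psi_W$, and $f\in\mathcal C(U,V)$ representing $\varphi_V$; the $W$-component of $\psi\circ\varphi$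 is $(g\circ f)_x$. This defines a category $\mathcal C^\star$ with objects the points of $X$ and $\mathcal C^\star(x,y)=\mathcal C_x^y$. For $X$ a $T_1$ space, a pre-pseudogroup on $X$ is such a $\mathcal C$ satisfying: (1) $\mathrm{Ob}(\mathcal C)=\mathrm{Ob}(X_{top})$; (2) for every open $V$ and $x\in X$, the map $\coprod_{y\in V}\mathcal C_x^y\to\mathcal C_x(V)$ induced by the projections is a bijection; (3) $\mathcal C^\star$ is a groupoid. A pseudogroup sheaf on $X$ is a pre-pseudogroup such that moreover (4) each presheaf $\mathcal C(-,V)$ is a sheaf. A morphism of pre-pseudogroups $\mathcal C\to\mathcal D$ is a functor whose composite with the embedding $X_{top}\subseteq\mathcal C$ equals the embedding $X_{top}\subseteq\mathcal D$. *)

Set Implicit Arguments.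
Unset Strict Implicit.

Record topology (X : Type) : Type := {
  open : (X -> Prop) -> Prop;
  open_full : open (fun _ => True);
  open_inter : forall U V, open U -> open V -> open (fun x => U x /\ V x);
  open_union : forall (I : Type) (F : I -> X -> Prop),
      (forall i, open (F i)) -> open (fun x => exists i, F i x)
}.

Definition T1 {X : Type} (T : topology X) : Prop :=
  forall x y : X, x <> y -> exists U, open T U /\ U x /\ ~ U y.

Record Opens {X : Type} (T : topology X) : Type := {
  carrier :> X -> Prop;
  carrier_open : open T carrier
}.

Definition sub {X} {T : topology X} (U V : Opens T) : Prop := forall x, U x -> V x.

Definition ointer {X} {T : topology X} (U V : Opens T) : Opens T :=
  {| carrier := fun x => U x /\ V x;
     carrier_open := @open_inter X T U V (carrier_open U) (carrier_open V) |}.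

Definition sub_interl {X} {T : topology X} (U V : Opens T) : sub (ointer U V) U :=
  fun x h => proj1 h.
Definition sub_interr {X} {T : topology X} (U V : Opens T) : sub (ointer U V) V :=
  fun x h => proj2 h.

Record PreCat {X : Type} (T : topology X) : Type := {
  hom : Opens T -> Opens T -> Type;
  comp : forall U V W, hom V W -> hom U V -> hom U W;
  idm : forall U, hom U U;
  incl : forall U V, sub U V -> hom U V;
  comp_assoc : forall U V W Z (h : hom W Z) (g : hom V W) (f : hom U V),
      comp h (comp g f) = comp (comp h g) f;
  comp_id_l : forall U V (f : hom U V), comp (idm V) f = f;
  comp_id_r : forall U V (f : hom U V), comp f (idm U) = f;
  incl_id : forall U (h : sub U U), incl h = idm U;
  incl_comp : forall U V W (h1 : sub V W) (h2 : sub U V) (h3 : sub U W),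
      comp (incl h1) (incl h2) = incl h3
}.
Arguments hom {X T} p U V : rename.
Arguments comp {X T} p {U V W} _ _.
Arguments idm {X T} p U.
Arguments incl {X T} p {U V} _.

(* A trivial instance (also fixes the universe of hom to contain X). *)
Definition trivial_precat {X : Type} (T : topology X) : PreCat T :=
  {| hom := fun _ _ => X -> X;
     comp := fun _ _ _ g f x => g (f x);
     idm := fun _ x => x;
     incl := fun _ _ _ x => x;
     comp_assoc := fun _ _ _ _ _ _ _ => eq_refl;
     comp_id_l := fun _ _ _ => eq_refl;
     comp_id_r := fun _ _ _ => eq_refl;
     incl_id := fun _ _ => eq_refl;
     incl_comp := fun _ _ _ _ _ _ => eq_refl |}.

Definition bij {A B : Type} (f : A -> B) : Prop :=
  (forall a b, f a = f b -> a = b) /\ (forall c, exists a, f a = c).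

Section Germs.
Context {X : Type} {T : topology X} (C : PreCat T).

(* a representative of a germ at x of an element of C(-,V): (U, x ∈ U, f ∈ C(U,V)) *)
Definition rep (x : X) (V : Opens T) : Type :=
  { U : Opens T & { _ : U x & hom C U V } }.
Definition rdom {x V} (a : rep x V) : Opens T := projT1 a.
Definition rpt {x V} (a : rep x V) : rdom a x := projT1 (projT2 a).
Definition rmap {x V} (a : rep x V) : hom C (rdom a) V := projT2 (projT2 a).
Definition mkrep {x : X} {V U : Opens T} (hx : U x) (f : hom C U V) : rep x V :=
  existT _ U (existT _ hx f).

Definition germ_rel {x V} (a b : rep x V) : Prop :=
  exists W : Opens T, W x /\
    exists (ha : sub W (rdom a)) (hb : sub W (rdom b)),
      comp C (rmap a) (incl C ha) = comp C (rmap b) (incl C hb).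

(* C_x(V) = colim_{U ∋ x} C(U,V), as the set of equivalence classes *)
Definition germ (x : X) (V : Opens T) : Type :=
  { P : rep x V -> Prop | exists a, forall b, P b <-> germ_rel a b }.

Definition germ_mem {x V} (g : germ x V) (a : rep x V) : Prop := proj1_sig g a.

Definition germ_of {x : X} {V U : Opens T} (hx : U x) (f : hom C U V) : germ x V :=
  exist (fun P : rep x V -> Prop => exists a, forall b, P b <-> germ_rel a b)
    (germ_rel (mkrep hx f))
    (ex_intro (fun a => forall b, germ_rel (mkrep hx f) b <-> germ_rel a b)
       (mkrep hx f) (fun b => iff_refl _)).

(* C_x^y = lim_{V ∋ y} C_x(V): compatible families of germs under
   postcomposition with inclusions *)
Definition stalk_lim (x y : X) : Type :=
  { phi : forall V : Opens T, V y -> germ x V |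
    forall (V V' : Opens T) (h : sub V' V) (hy' : V' y) (hy : V y) (a : rep x V'),
      germ_mem (phi V' hy') a ->
      phi V hy = germ_of (rpt a) (comp C (incl C h) (rmap a)) }.

Definition comp_of {x y : X} (phi : stalk_lim x y) (V : Opens T) (hy : V y) : germ x V :=
  proj1_sig phi V hy.

Definition is_id {x : X} (phi : stalk_lim x x) : Prop :=
  forall (W : Opens T) (hx : W x), comp_of phi hx = germ_of hx (idm C W).

Definition comp_rel {x y z : X} (psi : stalk_lim y z) (phi : stalk_lim x y)
    (chi : stalk_lim x z) : Prop :=
  forall (W : Opens T) (hz : W z),
    exists (V : Opens T) (hy : V y) (g : hom C V W)
           (U : Opens T) (hx : U x) (f : hom C U V),
      germ_mem (comp_of psi hz) (mkrep hy g) /\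
      germ_mem (comp_of phi hy) (mkrep hx f) /\
      comp_of chi hz = germ_of hx (comp C g f).

Definition cond2 : Prop :=
  forall (V : Opens T) (x : X),
    bij (fun p : { y : { y : X | V y } & stalk_lim x (proj1_sig y) } =>
           comp_of (projT2 p) (proj2_sig (projT1 p))).

Definition cond3 : Prop :=
  forall (x y : X) (phi : stalk_lim x y),
    exists (psi : stalk_lim y x) (ix : stalk_lim x x) (iy : stalk_lim y y),
      is_id ix /\ is_id iy /\ comp_rel psi phi ix /\ comp_rel phi psi iy.

Definition cond4 : Prop :=
  forall (V U : Opens T) (I : Type) (Ui : I -> Opens T)
         (hsub : forall i, sub (Ui i) U)
         (hcov : forall x, U x -> exists i, Ui i x)
         (f : forall i, hom C (Ui i) V),
    (forall i j, comp C (f i) (incl C (@sub_interl X T (Ui i) (Ui j)))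
               = comp C (f j) (incl C (@sub_interr X T (Ui i) (Ui j)))) ->
    exists g : hom C U V,
      (forall i, comp C g (incl C (hsub i)) = f i) /\
      (forall g' : hom C U V, (forall i, comp C g' (incl C (hsub i)) = f i) -> g' = g).

End Germs.

(* pre-pseudogroup (condition (1) is built into the type PreCat);
   the T1 hypothesis on X is a separate hypothesis of the theorem *)
Definition pre_pseudogroup {X} {T : topology X} (C : PreCat T) : Prop :=
  cond2 C /\ cond3 C.

Definition pseudogroup_sheaf {X} {T : topology X} (C : PreCat T) : Prop :=
  pre_pseudogroup C /\ cond4 C.

Record PPMor {X} {T : topology X} (C D : PreCat T) : Type := {
  fmap : forall U V, hom C U V -> hom D U V;
  fmap_comp : forall U V W (g : hom C V W) (f : hom C U V),
      fmap (comp C g f) = comp D (fmap g) (fmap f);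
  fmap_id : forall U, fmap (idm C U) = idm D U;
  fmap_incl : forall U V (h : sub U V), fmap (incl C h) = incl D h
}.
Arguments fmap {X T C D} p {U V} _ : rename.

(* Condition (2) says that every germ s at x
   of a morphism into V has a unique "target point" y in V, together with a
   unique element of C_x^y inducing s.  This allows germs at x to be pushed
   forward along any family of germs that is locally represented by morphisms
   of C, and yields the sheafification Chat:
     Chat(U,V) = families (s_x)_{x in U}, s_x a germ at x into V, that are
                 locally germs of a single morphism of C,
   composed by this push-forward action, with C -> Chat sending f to its germs. *)

From Stdlib Require Import ProofIrrelevance FunctionalExtensionality PropExtensionality IndefiniteDescription.

Lemma sig_eq {A : Type} {P : A -> Prop} (a b : sig P) : proj1_sig a = proj1_sig b -> a = b.
Proof. destruct a as [a pa], b as [b pb]; simpl; intros ->. f_equal. apply proof_irrelevance. Qed.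

Definition sub_refl {X} {T : topology X} (U : Opens T) : sub U U := fun x h => h.

Section Germs.
Context {X : Type} {T : topology X} {C : PreCat T}.

Lemma incl_irrel {U V : Opens T} (h1 h2 : sub U V) : incl C h1 = incl C h2.
Proof. f_equal; apply proof_irrelevance. Qed.

Lemma comp_incl_incl {U V W Z : Opens T} (f : hom C W Z) (h1 : sub V W) (h2 : sub U V) (h3 : sub U W) :
  comp C (comp C f (incl C h1)) (incl C h2) = comp C f (incl C h3).
Proof. rewrite <- comp_assoc, (incl_comp C h1 h2 h3). reflexivity. Qed.

Lemma comp_incl_refl_r {U V : Opens T} (f : hom C U V) (h : sub U U) : comp C f (incl C h) = f.
Proof. rewrite incl_id, comp_id_r; reflexivity. Qed.

Lemma comp_incl_refl_l {U V : Opens T} (f : hom C U V) (h : sub V V) : comp C (incl C h) f = f.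
Proof. rewrite incl_id, comp_id_l; reflexivity. Qed.

Lemma germ_rel_refl {x V} (a : rep C x V) : germ_rel a a.
Proof. exists (rdom a). split; [apply rpt|]. exists (sub_refl _), (sub_refl _). reflexivity. Qed.

Lemma germ_rel_sym {x V} (a b : rep C x V) : germ_rel a b -> germ_rel b a.
Proof. intros [W [hx [ha [hb e]]]]. exists W; split; [exact hx|]. exists hb, ha; auto. Qed.

(* Transitivity: restrict both agreements to the intersection of the two
   neighbourhoods of x. *)
Lemma germ_rel_trans {x V} (a b c : rep C x V) : germ_rel a b -> germ_rel b c -> germ_rel a c.
Proof.
  intros [W1 [hx1 [ha [hb e1]]]] [W2 [hx2 [hb' [hc e2]]]].
  exists (ointer W1 W2). split; [split; assumption|].
  exists (fun z hz => ha z (proj1 hz)), (fun z hz => hc z (proj2 hz)).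
  pose (hbW := fun z (hz : ointer W1 W2 z) => hb' z (proj2 hz)).
  rewrite <- (comp_incl_incl (rmap a) ha (@sub_interl _ _ W1 W2)).
  rewrite e1, (comp_incl_incl (rmap b) hb (@sub_interl _ _ W1 W2) hbW).
  rewrite <- (comp_incl_incl (rmap b) hb' (@sub_interr _ _ W1 W2) hbW), e2.
  apply comp_incl_incl.
Qed.

Lemma germ_eq_of_mem {x V} (g : germ C x V) (a : rep C x V) :
  germ_mem g a -> g = germ_of (rpt a) (rmap a).
Proof.
  destruct g as [P [a0 H0]]; unfold germ_mem; simpl; intro Ha.
  apply sig_eq; simpl. apply functional_extensionality; intro b.
  apply propositional_extensionality.
  assert (E : mkrep (rpt a) (rmap a) = a) by (destruct a as [U [h f]]; reflexivity).
  rewrite E, H0. apply H0 in Ha. split; intro Hb.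
  - apply germ_rel_trans with a0; [apply germ_rel_sym|]; assumption.
  - apply germ_rel_trans with a; assumption.
Qed.

Lemma germ_has_mem {x V} (g : germ C x V) : exists a, germ_mem g a.
Proof. destruct g as [P [a0 H0]]. exists a0. unfold germ_mem; simpl. apply H0, germ_rel_refl. Qed.

Lemma germ_mem_closed {x V} (g : germ C x V) a b : germ_mem g a -> germ_rel a b -> germ_mem g b.
Proof.
  destruct g as [P [a0 H0]]; unfold germ_mem; simpl. intros Ha Hab.
  apply H0. apply H0 in Ha. eapply germ_rel_trans; eauto.
Qed.

Lemma germ_mem_related {x V} (g : germ C x V) a b : germ_mem g a -> germ_mem g b -> germ_rel a b.
Proof.
  destruct g as [P [a0 H0]]; unfold germ_mem; simpl. intros Ha Hb.
  apply H0 in Ha; apply H0 in Hb. eapply germ_rel_trans; [apply germ_rel_sym|]; eauto.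
Qed.

Lemma germ_eq_of_common_mem {x V} (g1 g2 : germ C x V) a : germ_mem g1 a -> germ_mem g2 a -> g1 = g2.
Proof. intros H1 H2. rewrite (germ_eq_of_mem _ _ H1), (germ_eq_of_mem _ _ H2). reflexivity. Qed.

Lemma germ_of_eq_of_rel {x : X} {V U U' : Opens T} (hx : U x) (hx' : U' x) (f : hom C U V) (f' : hom C U' V) :
  germ_rel (mkrep hx f) (mkrep hx' f') -> germ_of hx f = germ_of hx' f'.
Proof. intro H. apply (germ_eq_of_mem (germ_of hx f) (mkrep hx' f') H). Qed.

Lemma germ_rel_of_eq {x : X} {V U U' : Opens T} (hx : U x) (hx' : U' x) (f : hom C U V) (f' : hom C U' V) :
  germ_of hx f = germ_of hx' f' -> germ_rel (mkrep hx f) (mkrep hx' f').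
Proof.
  intro H. change (germ_mem (germ_of hx f) (mkrep hx' f')). rewrite H. apply germ_rel_refl.
Qed.

Lemma germ_mem_iff {x : X} {V U : Opens T} (g : germ C x V) (hx : U x) (f : hom C U V) :
  germ_mem g (mkrep hx f) <-> g = germ_of hx f.
Proof.
  split; intro H.
  - apply (germ_eq_of_mem _ _ H).
  - subst. apply germ_rel_refl.
Qed.

Lemma germ_of_irrel {x : X} {V U : Opens T} (hx hx' : U x) (f : hom C U V) : germ_of hx f = germ_of hx' f.
Proof. f_equal; apply proof_irrelevance. Qed.

Lemma germ_of_restrict {x : X} {V U Q : Opens T} (hQ : sub Q U) (hxQ : Q x) (hxU : U x) (f : hom C U V) :
  germ_of hxQ (comp C f (incl C hQ)) = germ_of hxU f.
Proof.
  apply germ_of_eq_of_rel. exists Q. split; [exact hxQ|]. exists (sub_refl Q), hQ. simpl.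
  apply comp_incl_refl_r.
Qed.

Lemma germ_of_postcomp {x : X} {V W U U' : Opens T} (hx : U x) (hx' : U' x)
  (f : hom C U V) (f' : hom C U' V) (g : hom C V W) :
  germ_of hx f = germ_of hx' f' -> germ_of hx (comp C g f) = germ_of hx' (comp C g f').
Proof.
  intro H. apply germ_rel_of_eq in H. destruct H as [Q [hq [ha [hb e]]]].
  apply germ_of_eq_of_rel. exists Q. split; [exact hq|]. exists ha, hb.
  unfold rmap, rdom, mkrep in *; simpl in *.
  rewrite <- !comp_assoc, e. reflexivity.
Qed.

Lemma germ_representative {x V} (g : germ C x V) :
  exists (U : Opens T) (hx : U x) (f : hom C U V), g = germ_of hx f.
Proof.
  destruct (germ_has_mem g) as [a Ha]. exists (rdom a), (rpt a), (rmap a).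
  apply germ_eq_of_mem; exact Ha.
Qed.

Lemma stalk_restrict {x y} (phi : stalk_lim C x y) (V V' : Opens T) (h : sub V' V) (hy' : V' y) (hy : V y)
  (U' : Opens T) (hx : U' x) (f : hom C U' V') :
  comp_of phi hy' = germ_of hx f -> comp_of phi hy = germ_of hx (comp C (incl C h) f).
Proof.
  intro H. apply (proj2_sig phi V V' h hy' hy (mkrep hx f)).
  change (germ_mem (comp_of phi hy') (mkrep hx f)). rewrite H. apply germ_rel_refl.
Qed.

Lemma stalk_representative {x y} (phi : stalk_lim C x y) (V : Opens T) (hy : V y) :
  exists (U : Opens T) (hx : U x) (f : hom C U V), comp_of phi hy = germ_of hx f.
Proof. apply germ_representative. Qed.

Lemma stalk_ext {x y} (p q : stalk_lim C x y) :
  (forall (V : Opens T) (hy : V y), comp_of p hy = comp_of q hy) -> p = q.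
Proof.
  intro H. apply sig_eq. apply functional_extensionality_dep; intro V.
  apply functional_extensionality_dep; intro hy. apply H.
Qed.

Lemma cond2_injective (HC2 : cond2 C) {x : X} {V : Opens T} {y1 y2 : X} (hy1 : V y1) (hy2 : V y2)
  (phi1 : stalk_lim C x y1) (phi2 : stalk_lim C x y2) :
  comp_of phi1 hy1 = comp_of phi2 hy2 ->
  existT (stalk_lim C x) y1 phi1 = existT (stalk_lim C x) y2 phi2.
Proof.
  intro E.
  assert (Heq := proj1 (HC2 V x)
     (existT (fun y : {y : X | V y} => stalk_lim C x (proj1_sig y)) (exist _ y1 hy1) phi1)
     (existT (fun y : {y : X | V y} => stalk_lim C x (proj1_sig y)) (exist _ y2 hy2) phi2) E).
  exact (f_equal (fun p : {y : {y : X | V y} & stalk_lim C x (proj1_sig y)} =>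
       existT (stalk_lim C x) (proj1_sig (projT1 p)) (projT2 p)) Heq).
Qed.

End Germs.

Section Sheafification.
Context {X : Type} {T : topology X} (C : PreCat T) (HC2 : cond2 C).

Lemma target_exists {x : X} {V : Opens T} (s : germ C x V) :
  exists (y : X) (hy : V y) (phi : stalk_lim C x y), comp_of phi hy = s.
Proof. destruct (proj2 (HC2 V x) s) as [[[y hy] phi] E]. exists y, hy, phi. exact E. Qed.

Lemma target_unique {x : X} {V : Opens T} (s : germ C x V) :
  exists (y : X) (hy : V y) (phi : stalk_lim C x y), comp_of phi hy = s /\
   forall (V1 : Opens T) (hV : sub V1 V) (U1 : Opens T) (hx : U1 x) (f : hom C U1 V1),
     germ_of hx (comp C (incl C hV) f) = s -> exists hy1 : V1 y, comp_of phi hy1 = germ_of hx f.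
Proof.
  destruct (target_exists s) as [y [hy [phi Hs]]]. exists y, hy, phi. split; [exact Hs|].
  intros V1 hV U1 hx f E.
  destruct (target_exists (germ_of hx f)) as [y1 [hy1 [phi1 H1]]].
  assert (H2 : comp_of phi1 (hV y1 hy1) = s).
  { rewrite <- E. apply (stalk_restrict phi1 V V1 hV hy1 _ U1 hx f H1). }
  assert (Heq := cond2_injective HC2 _ hy phi1 phi (eq_trans H2 (eq_sym Hs))).
  assert (Ey : y1 = y) by exact (f_equal (@projT1 _ _) Heq). subst y1.
  apply inj_pair2 in Heq. subst phi1. exists hy1. exact H1.
Qed.

Definition family (U V : Opens T) : Type := forall x, U x -> germ C x V.
Definition represents {V' V W : Opens T} (s : family V W) (g : hom C V' W) : Prop :=
  forall z (hz : V' z) (hz' : V z), s z hz' = germ_of hz g.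
Definition locally_represented {U V : Opens T} (s : family U V) : Prop :=
  forall x (hx : U x), exists (U' : Opens T) (hx' : U' x) (f : hom C U' V), sub U' U /\ represents s f.
Definition hat_hom (U V : Opens T) : Type := {s : family U V | locally_represented s}.

(* Action of a family s on a germ g0: write g0 as the germ of (V' -> V) o f
   with s represented by g on V', and take the germ of g o f.  As a class of
   representatives: *)
Definition act_graph {x : X} {V W : Opens T} (s : family V W) (g0 : germ C x V) (b : rep C x W) : Prop :=
  exists (V' : Opens T) (hV : sub V' V) (U' : Opens T) (hx : U' x) (f : hom C U' V') (g : hom C V' W),
    germ_of hx (comp C (incl C hV) f) = g0 /\ represents s g /\ germ_rel (mkrep hx (comp C g f)) b.

(* The action does not depend on the chosen factorisation: both
   factorisations pass through the target point y of g0, near which the two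
   representatives of s agree. *)
Lemma act_welldefined {x : X} {V W : Opens T} (s : family V W) (g0 : germ C x V)
  (V1 : Opens T) (h1 : sub V1 V) (U1 : Opens T) (hx1 : U1 x) (f1 : hom C U1 V1) (g1 : hom C V1 W)
  (V2 : Opens T) (h2 : sub V2 V) (U2 : Opens T) (hx2 : U2 x) (f2 : hom C U2 V2) (g2 : hom C V2 W) :
  germ_of hx1 (comp C (incl C h1) f1) = g0 -> represents s g1 ->
  germ_of hx2 (comp C (incl C h2) f2) = g0 -> represents s g2 ->
  germ_of hx1 (comp C g1 f1) = germ_of hx2 (comp C g2 f2).
Proof.
  intros e1 r1 e2 r2. destruct (target_unique g0) as [y [hy [phi [Hphi Hk]]]].
  destruct (Hk V1 h1 U1 hx1 f1 e1) as [hy1 E1]. destruct (Hk V2 h2 U2 hx2 f2 e2) as [hy2 E2].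
  assert (G : germ_of hy1 g1 = germ_of hy2 g2).
  { rewrite <- (r1 y hy1 hy), <- (r2 y hy2 hy). reflexivity. }
  apply germ_rel_of_eq in G. destruct G as [Wq [hyW [ha [hb eg]]]].
  unfold rmap, rdom, mkrep in *; simpl in *.
  destruct (stalk_representative phi Wq hyW) as [U3 [hx3 [h Hh]]].
  assert (F1 := stalk_restrict phi V1 Wq ha hyW hy1 U3 hx3 h Hh).
  assert (F2 := stalk_restrict phi V2 Wq hb hyW hy2 U3 hx3 h Hh).
  rewrite E1 in F1. rewrite E2 in F2.
  rewrite (germ_of_postcomp hx1 hx3 f1 _ g1 F1), (germ_of_postcomp hx2 hx3 f2 _ g2 F2).
  rewrite !comp_assoc, eg. reflexivity.
Qed.

(* For a locally represented family a factorisation exists: represent s near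
   the target point y of g0 and pull phi back to that neighbourhood. *)
Lemma act_witness {x : X} {V W : Opens T} (s : hat_hom V W) (g0 : germ C x V) :
  exists (V' : Opens T) (hV : sub V' V) (U' : Opens T) (hx : U' x) (f : hom C U' V') (g : hom C V' W),
    germ_of hx (comp C (incl C hV) f) = g0 /\ represents (proj1_sig s) g.
Proof.
  destruct (target_exists g0) as [y [hy [phi Hs]]].
  destruct (proj2_sig s y hy) as [V' [hy' [g [hsub hr]]]].
  destruct (stalk_representative phi V' hy') as [U' [hx [f Hf]]].
  assert (E := stalk_restrict phi V V' hsub hy' hy U' hx f Hf). rewrite Hs in E.
  exists V', hsub, U', hx, f, g. split; [exact (eq_sym E)|exact hr].
Qed.

Lemma act_is_germ {x : X} {V W : Opens T} (s : hat_hom V W) (g0 : germ C x V) :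
  exists a, forall b, act_graph (proj1_sig s) g0 b <-> germ_rel a b.
Proof.
  destruct (act_witness s g0) as [V' [hsub [U' [hx [f [g [E hr]]]]]]].
  exists (mkrep hx (comp C g f)). intro b. split.
  - intros [V2 [h2 [U2 [hx2 [f2 [g2 [e2 [r2 Hb]]]]]]]]. eapply germ_rel_trans; [|exact Hb].
    apply germ_rel_of_eq. apply (act_welldefined (proj1_sig s) g0 V' hsub U' hx f g V2 h2 U2 hx2 f2 g2); auto.
  - intro Hb. exists V', hsub, U', hx, f, g. auto.
Qed.

Definition act {x : X} {V W : Opens T} (s : hat_hom V W) (g0 : germ C x V) : germ C x W :=
  exist _ (act_graph (proj1_sig s) g0) (act_is_germ s g0).

Lemma act_spec {x : X} {V W : Opens T} (s : hat_hom V W) (g0 : germ C x V) (V' : Opens T) (hV : sub V' V)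
  (U' : Opens T) (hx : U' x) (f : hom C U' V') (g : hom C V' W) :
  germ_of hx (comp C (incl C hV) f) = g0 -> represents (proj1_sig s) g ->
  act s g0 = germ_of hx (comp C g f).
Proof.
  intros e r. apply (germ_eq_of_mem (act s g0) (mkrep hx (comp C g f))).
  unfold germ_mem, act; simpl. exists V', hV, U', hx, f, g.
  split; [exact e|]. split; [exact r|]. apply germ_rel_refl.
Qed.

Lemma act_represented {x : X} {V W V' U' : Opens T} (s : hat_hom V W) (hV : sub V' V) (g : hom C V' W)
  (hx : U' x) (f : hom C U' V') :
  represents (proj1_sig s) g -> act s (germ_of hx (comp C (incl C hV) f)) = germ_of hx (comp C g f).
Proof. intro r. apply (act_spec s _ V' hV U' hx f g); [reflexivity|exact r]. Qed.

Lemma embed_locally_represented {U V : Opens T} (f : hom C U V) :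
  locally_represented (fun x (hx : U x) => germ_of hx f).
Proof. intros x hx. exists U, hx, f. split; [exact (sub_refl U)|]. intros z hz hz'. apply germ_of_irrel. Qed.

Definition embed {U V : Opens T} (f : hom C U V) : hat_hom U V :=
  exist _ (fun x (hx : U x) => germ_of hx f) (embed_locally_represented f).

Lemma act_embed {x : X} {U V W : Opens T} (hx : U x) (f : hom C U V) (g : hom C V W) :
  act (embed g) (germ_of hx f) = germ_of hx (comp C g f).
Proof.
  pattern f at 1. rewrite <- (comp_incl_refl_l f (sub_refl V)). apply act_represented.
  intros z hz hz'. apply germ_of_irrel.
Qed.

Lemma represents_restrict {V' V W Q : Opens T} (s : family V W) (g : hom C V' W) (hsub : sub Q V') :
  represents s g -> represents s (comp C g (incl C hsub)).
Proof. intros r z hz hz'. rewrite (germ_of_restrict hsub hz (hsub z hz) g). apply r. Qed.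

Lemma act_incl {x : X} {U W Q : Opens T} (s : hat_hom U W) (h : sub Q U) (hxQ : Q x) (hxU : U x) :
  act s (germ_of hxQ (incl C h)) = proj1_sig s x hxU.
Proof.
  destruct (proj2_sig s x hxU) as [V' [hx' [g [hsub hr]]]].
  assert (hxR : ointer Q V' x) by (split; assumption).
  rewrite <- (germ_of_restrict (@sub_interl _ _ Q V') hxR hxQ (incl C h)).
  assert (E : comp C (incl C h) (incl C (@sub_interl _ _ Q V'))
            = comp C (incl C hsub) (incl C (@sub_interr _ _ Q V'))).
  { rewrite (incl_comp C h (@sub_interl _ _ Q V') (fun z hz => hsub z (proj2 hz))).
    rewrite (incl_comp C hsub (@sub_interr _ _ Q V') (fun z hz => hsub z (proj2 hz))). reflexivity. }
  rewrite E, (act_represented s hsub g hxR _ hr).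
  rewrite (germ_of_restrict (@sub_interr _ _ Q V') hxR hx' g). symmetry; apply hr.
Qed.

Lemma hat_comp_local {U V W : Opens T} (s : hat_hom V W) (t : hat_hom U V) (x : X) (hx : U x) :
  exists (Q : Opens T) (hxQ : Q x) (hQ : sub Q U) (U1 : Opens T) (hU1 : sub U1 U) (f1 : hom C U1 V)
    (hQ1 : sub Q U1) (V' : Opens T) (hV : sub V' V) (f : hom C Q V') (g : hom C V' W),
    represents (proj1_sig t) f1 /\ represents (proj1_sig s) g /\
    comp C (incl C hV) f = comp C f1 (incl C hQ1) /\
    (forall z (hz : Q z) (hzU : U z), act s (proj1_sig t z hzU) = germ_of hz (comp C g f)).
Proof.
  destruct (proj2_sig t x hx) as [U1 [hx1 [f1 [hs1 hr1]]]].
  destruct (act_witness s (germ_of hx1 f1)) as [V' [hV [U' [hx' [f [g [e r]]]]]]].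
  apply germ_rel_of_eq in e. destruct e as [Q [hxQ [ha [hb eq]]]].
  unfold rmap, rdom, mkrep in *; simpl in *.
  exists Q, hxQ, (fun z hz => hs1 z (hb z hz)), U1, hs1, f1, hb, V', hV, (comp C f (incl C ha)), g.
  split; [exact hr1|]. split; [exact r|]. split; [rewrite comp_assoc; exact eq|].
  intros z hz hzU. rewrite (hr1 z (hb z hz) hzU). rewrite <- (germ_of_restrict hb hz (hb z hz) f1).
  rewrite <- eq, <- comp_assoc. apply act_represented. exact r.
Qed.

Lemma hat_comp_locally_represented {U V W : Opens T} (s : hat_hom V W) (t : hat_hom U V) :
  locally_represented (fun x (hx : U x) => act s (proj1_sig t x hx)).
Proof.
  intros x hx.
  destruct (hat_comp_local s t x hx) as [Q [hxQ [hQ [_ [_ [_ [_ [V' [hV [f [g [_ [_ [_ H]]]]]]]]]]]]]].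
  exists Q, hxQ, (comp C g f). split; [exact hQ|]. intros z hz hz'. apply H.
Qed.

Definition hat_comp {U V W : Opens T} (s : hat_hom V W) (t : hat_hom U V) : hat_hom U W :=
  exist _ (fun x (hx : U x) => act s (proj1_sig t x hx)) (hat_comp_locally_represented s t).

Lemma hat_hom_ext {U V : Opens T} (s t : hat_hom U V) :
  (forall x (hx : U x), proj1_sig s x hx = proj1_sig t x hx) -> s = t.
Proof.
  intro H. apply sig_eq. apply functional_extensionality_dep; intro x.
  apply functional_extensionality_dep; intro hx. apply H.
Qed.

Lemma hat_comp_id_l {U V : Opens T} (t : hat_hom U V) : hat_comp (embed (idm C V)) t = t.
Proof.
  apply hat_hom_ext; intros x hx; simpl.
  destruct (proj2_sig t x hx) as [U' [hx' [f [hs hr]]]].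
  rewrite (hr x hx' hx), act_embed, comp_id_l. reflexivity.
Qed.

Lemma hat_comp_id_r {U V : Opens T} (s : hat_hom U V) : hat_comp s (embed (idm C U)) = s.
Proof.
  apply hat_hom_ext; intros x hx; simpl. rewrite <- (incl_id C (sub_refl U)). apply act_incl.
Qed.

Lemma embed_comp {U V W : Opens T} (g : hom C V W) (f : hom C U V) :
  hat_comp (embed g) (embed f) = embed (comp C g f).
Proof. apply hat_hom_ext; intros x hx; simpl. apply act_embed. Qed.

(* Both sides are compared near the target point of the germ of f. *)
Lemma act_assoc_local {V W Z Q : Opens T} (s : hat_hom W Z) (t : hat_hom V W) (hQ : sub Q V)
  (g' : hom C Q W) (h' : hom C Q Z) :
  represents (proj1_sig t) g' -> represents (proj1_sig (hat_comp s t)) h' ->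
  forall x (U' : Opens T) (hx : U' x) (f : hom C U' Q),
    act s (germ_of hx (comp C g' f)) = germ_of hx (comp C h' f).
Proof.
  intros rt rst x U' hx f.
  destruct (target_exists (germ_of hx f)) as [y [hyQ [phi Hphi]]].
  assert (hyV := hQ y hyQ).
  assert (E0 : act s (germ_of hyQ g') = germ_of hyQ h').
  { rewrite <- (rt y hyQ hyV), <- (rst y hyQ hyV). reflexivity. }
  destruct (act_witness s (germ_of hyQ g')) as [W' [hW [U4 [hy4 [f4 [g4 [e4 r4]]]]]]].
  rewrite (act_spec s _ W' hW U4 hy4 f4 g4 e4 r4) in E0.
  apply germ_rel_of_eq in e4. destruct e4 as [Q1 [hy1 [a1 [b1 eq1]]]].
  apply germ_rel_of_eq in E0. destruct E0 as [Q2 [hy2 [a2 [b2 eq2]]]].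
  unfold rmap, rdom, mkrep in *; simpl in *.
  assert (hyR : ointer Q1 Q2 y) by (split; assumption).
  pose (bR := fun z (hz : ointer Q1 Q2 z) => b1 z (proj1 hz)).
  pose (aR := fun z (hz : ointer Q1 Q2 z) => a1 z (proj1 hz)).
  destruct (stalk_representative phi (ointer Q1 Q2) hyR) as [U5 [hx5 [k Hk]]].
  assert (E := stalk_restrict phi Q (ointer Q1 Q2) bR hyR hyQ U5 hx5 k Hk). rewrite Hphi in E.
  rewrite (germ_of_postcomp hx hx5 f _ g' E), (germ_of_postcomp hx hx5 f _ h' E).
  assert (K1 : comp C g' (incl C bR) = comp C (incl C hW) (comp C f4 (incl C aR))).
  { rewrite <- (comp_incl_incl g' b1 (@sub_interl _ _ Q1 Q2) bR), <- eq1, comp_assoc.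
    apply comp_incl_incl. }
  assert (K2 : comp C (comp C g4 f4) (incl C aR) = comp C h' (incl C bR)).
  { rewrite <- (comp_incl_incl (comp C g4 f4) a2 (@sub_interr _ _ Q1 Q2) aR), eq2.
    apply comp_incl_incl. }
  rewrite comp_assoc, K1, <- comp_assoc, (act_represented s hW g4 hx5 _ r4).
  rewrite !comp_assoc, K2. reflexivity.
Qed.

Lemma hat_comp_assoc {U V W Z : Opens T} (s : hat_hom W Z) (t : hat_hom V W) (r : hat_hom U V) :
  hat_comp s (hat_comp t r) = hat_comp (hat_comp s t) r.
Proof.
  apply hat_hom_ext; intros x hx; simpl. generalize (proj1_sig r x hx) as g0; intro g0.
  destruct (target_exists g0) as [y [hy [phi Hs]]].
  destruct (proj2_sig t y hy) as [V1 [hy1 [g1 [hs1 hr1]]]].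
  destruct (proj2_sig (hat_comp s t) y hy) as [V3 [hy3 [h [hs3 hr3]]]].
  assert (hyQ : ointer V1 V3 y) by (split; assumption).
  pose (hQV := fun z (hz : ointer V1 V3 z) => hs1 z (proj1 hz)).
  destruct (stalk_representative phi (ointer V1 V3) hyQ) as [U' [hx' [f Hf]]].
  assert (E := stalk_restrict phi V (ointer V1 V3) hQV hyQ hy U' hx' f Hf). subst g0. rewrite E.
  assert (L : act t (germ_of hx' (comp C (incl C hQV) f))
              = germ_of hx' (comp C g1 (comp C (incl C (@sub_interl _ _ V1 V3)) f))).
  { rewrite <- (act_represented t hs1 g1 hx' _ hr1), comp_assoc, (incl_comp C hs1 _ hQV).
    reflexivity. }
  assert (R : act (hat_comp s t) (germ_of hx' (comp C (incl C hQV) f))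
              = germ_of hx' (comp C h (comp C (incl C (@sub_interr _ _ V1 V3)) f))).
  { rewrite <- (act_represented (hat_comp s t) hs3 h hx' _ hr3), comp_assoc, (incl_comp C hs3 _ hQV).
    reflexivity. }
  rewrite L, R, !comp_assoc. apply (act_assoc_local s t hQV); apply represents_restrict; assumption.
Qed.

Definition Chat : PreCat T := {|
  hom := hat_hom;
  comp := fun U V W s t => hat_comp s t;
  idm := fun U => embed (idm C U);
  incl := fun U V h => embed (incl C h);
  comp_assoc := fun U V W Z h g f => hat_comp_assoc h g f;
  comp_id_l := fun U V f => hat_comp_id_l f;
  comp_id_r := fun U V f => hat_comp_id_r f;
  incl_id := fun U h => f_equal embed (incl_id C h);
  incl_comp := fun U V W h1 h2 h3 => eq_trans (embed_comp _ _) (f_equal embed (incl_comp C h1 h2 h3))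
|}.

Definition embed_mor : PPMor C Chat := {|
  fmap := fun U V f => (embed f : hom Chat U V);
  fmap_comp := fun U V W g f => eq_sym (embed_comp g f);
  fmap_id := fun U => eq_refl;
  fmap_incl := fun U V h => eq_refl
|}.

Definition germ_value {x : X} {V : Opens T} (a : rep Chat x V) : germ C x V :=
  proj1_sig (rmap a : hat_hom (rdom a) V) x (rpt a).

(* Two representatives have the same germ in Chat iff their values at x
   agree: a family that is locally a germ of C is determined near x by its
   value at x. *)
Lemma germ_rel_iff_value {x : X} {V : Opens T} (a b : rep Chat x V) :
  germ_rel a b <-> germ_value a = germ_value b.
Proof.
  split.
  - intros [W [hxW [ha [hb e]]]]. unfold germ_value.
    assert (E := f_equal (fun s : hat_hom W V => proj1_sig s x hxW) e). simpl in E.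
    rewrite (act_incl (rmap a) ha hxW (ha x hxW)), (act_incl (rmap b) hb hxW (hb x hxW)) in E.
    replace (rpt a) with (ha x hxW) by apply proof_irrelevance.
    replace (rpt b) with (hb x hxW) by apply proof_irrelevance. exact E.
  - destruct a as [Ua [hxa s]], b as [Ub [hxb t]]. unfold germ_value, rmap, rpt, rdom; simpl. intro E.
    destruct (proj2_sig s x hxa) as [U1 [hx1 [f1 [hs1 hr1]]]].
    destruct (proj2_sig t x hxb) as [U2 [hx2 [f2 [hs2 hr2]]]].
    rewrite (hr1 x hx1 hxa), (hr2 x hx2 hxb) in E.
    apply germ_rel_of_eq in E. destruct E as [Q [hxQ [a1 [b2 eq]]]].
    unfold rmap, rdom, mkrep in *; simpl in *.
    exists Q. split; [exact hxQ|].
    exists (fun z hz => hs1 z (a1 z hz)), (fun z hz => hs2 z (b2 z hz)). simpl.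
    apply hat_hom_ext; intros z hz. simpl.
    rewrite (act_incl s _ hz (hs1 z (a1 z hz))), (act_incl t _ hz (hs2 z (b2 z hz))).
    rewrite (hr1 z (a1 z hz)), (hr2 z (b2 z hz)).
    rewrite <- (germ_of_restrict a1 hz (a1 z hz) f1), <- (germ_of_restrict b2 hz (b2 z hz) f2), eq.
    reflexivity.
Qed.

Lemma flatten_is_germ {x : X} {V : Opens T} (G : germ Chat x V) :
  exists c0, forall c, (exists a, germ_mem G a /\ germ_mem (germ_value a) c) <-> germ_rel c0 c.
Proof.
  destruct (germ_has_mem G) as [a0 H0]. destruct (proj2_sig (germ_value a0)) as [c0 Hc0].
  exists c0. intro c. rewrite <- Hc0. split.
  - intros [a [Ha Hc]].
    assert (E : germ_value a0 = germ_value a)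
      by (apply germ_rel_iff_value; eapply germ_mem_related; eauto).
    rewrite E. exact Hc.
  - intro Hc. exists a0. auto.
Qed.

Definition flatten_germ {x : X} {V : Opens T} (G : germ Chat x V) : germ C x V :=
  exist _ (fun c => exists a, germ_mem G a /\ germ_mem (germ_value a) c) (flatten_is_germ G).

Lemma flatten_germ_mem {x : X} {V : Opens T} (G : germ Chat x V) a :
  germ_mem G a -> flatten_germ G = germ_value a.
Proof.
  intro Ha. apply sig_eq; simpl. apply functional_extensionality; intro c.
  apply propositional_extensionality. split.
  - intros [a' [Ha' Hc]].
    assert (E : germ_value a' = germ_value a)
      by (apply germ_rel_iff_value; eapply germ_mem_related; eauto).
    rewrite E in Hc; exact Hc.
  - intro Hc. exists a; auto.
Qed.

Lemma flatten_germ_of {x : X} {V U : Opens T} (hx : U x) (s : hom Chat U V) :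
  flatten_germ (germ_of hx s) = proj1_sig (s : hat_hom U V) x hx.
Proof. apply (flatten_germ_mem _ (mkrep hx s)). apply germ_rel_refl. Qed.

Lemma flatten_germ_inj {x : X} {V : Opens T} (G1 G2 : germ Chat x V) :
  flatten_germ G1 = flatten_germ G2 -> G1 = G2.
Proof.
  intro E. destruct (germ_has_mem G1) as [a1 H1]. destruct (germ_has_mem G2) as [a2 H2].
  rewrite (flatten_germ_mem _ _ H1), (flatten_germ_mem _ _ H2) in E. apply germ_rel_iff_value in E.
  apply (germ_eq_of_common_mem G1 G2 a2); [exact (germ_mem_closed G1 a1 a2 H1 E) | exact H2].
Qed.

Lemma lift_is_germ {x : X} {V : Opens T} (c : germ C x V) :
  exists a0 : rep Chat x V, forall a, germ_value a = c <-> germ_rel a0 a.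
Proof.
  destruct (germ_representative c) as [U [hx [f Hc]]].
  exists (mkrep (C:=Chat) hx (embed f : hom Chat U V)).
  intro a. rewrite germ_rel_iff_value.
  change (germ_value (mkrep (C:=Chat) hx (embed f : hom Chat U V))) with (germ_of hx f).
  subst c. split; intro H; symmetry; exact H.
Qed.

Definition lift_germ {x : X} {V : Opens T} (c : germ C x V) : germ Chat x V :=
  exist _ (fun a => germ_value a = c) (lift_is_germ c).

Lemma flatten_lift_germ {x : X} {V : Opens T} (c : germ C x V) : flatten_germ (lift_germ c) = c.
Proof.
  destruct (lift_is_germ c) as [a0 H0].
  assert (Ha0 : germ_mem (lift_germ c) a0) by (change (germ_value a0 = c); apply H0; apply germ_rel_refl).
  rewrite (flatten_germ_mem _ _ Ha0). exact Ha0.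
Qed.

(* Flattening and lifting are compatible with the limits defining C_x^y and
   Chat_x^y, so these two sets are in bijection. *)
Lemma flatten_stalk_compat {x y : X} (phi : stalk_lim Chat x y) :
  forall (V V' : Opens T) (h : sub V' V) (hy' : V' y) (hy : V y) (a : rep C x V'),
    germ_mem (flatten_germ (comp_of phi hy')) a ->
    flatten_germ (comp_of phi hy) = germ_of (rpt a) (comp C (incl C h) (rmap a)).
Proof.
  intros V V' h hy' hy a Ha.
  destruct (germ_has_mem (comp_of phi hy')) as [b Hb].
  assert (E := proj2_sig phi V V' h hy' hy b Hb). unfold comp_of. rewrite E.
  rewrite flatten_germ_of. simpl.
  rewrite (flatten_germ_mem _ _ Hb) in Ha. apply germ_eq_of_mem in Ha. unfold germ_value in Ha.
  rewrite Ha. apply act_embed.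
Qed.

Definition flatten_stalk {x y : X} (phi : stalk_lim Chat x y) : stalk_lim C x y :=
  exist _ (fun (V : Opens T) (hy : V y) => flatten_germ (comp_of phi hy)) (flatten_stalk_compat phi).

Lemma lift_stalk_compat {x y : X} (phi : stalk_lim C x y) :
  forall (V V' : Opens T) (h : sub V' V) (hy' : V' y) (hy : V y) (a : rep Chat x V'),
    germ_mem (lift_germ (comp_of phi hy')) a ->
    lift_germ (comp_of phi hy) = germ_of (rpt a) (comp Chat (incl Chat h) (rmap a)).
Proof.
  intros V V' h hy' hy a Ha. apply flatten_germ_inj. rewrite flatten_lift_germ, flatten_germ_of. simpl.
  change (germ_value a = comp_of phi hy') in Ha. unfold germ_value in Ha.
  destruct (stalk_representative phi V' hy') as [U [hx [f Hf]]].
  rewrite (stalk_restrict phi V V' h hy' hy U hx f Hf).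
  rewrite Ha, Hf. symmetry; apply act_embed.
Qed.

Definition lift_stalk {x y : X} (phi : stalk_lim C x y) : stalk_lim Chat x y :=
  exist _ (fun (V : Opens T) (hy : V y) => lift_germ (comp_of phi hy)) (lift_stalk_compat phi).

Lemma flatten_lift_stalk {x y : X} (phi : stalk_lim C x y) : flatten_stalk (lift_stalk phi) = phi.
Proof. apply stalk_ext; intros V hy. exact (flatten_lift_germ (comp_of phi hy)). Qed.

Lemma flatten_stalk_inj {x y : X} (p q : stalk_lim Chat x y) : flatten_stalk p = flatten_stalk q -> p = q.
Proof.
  intro E. apply stalk_ext; intros V hy. apply flatten_germ_inj.
  exact (f_equal (fun r => comp_of r hy) E).
Qed.

(* (2) for Chat is (2) for C transported along flattening. *)
Lemma Chat_cond2 : cond2 Chat.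
Proof.
  intros V x. split.
  - intros [[y1 h1] p1] [[y2 h2] p2] E. simpl in E.
    assert (E' : comp_of (flatten_stalk p1) h1 = comp_of (flatten_stalk p2) h2)
      by exact (f_equal flatten_germ E).
    assert (Heq := cond2_injective HC2 h1 h2 _ _ E').
    assert (Ey : y1 = y2) by exact (f_equal (@projT1 _ _) Heq). subst y2.
    assert (Eh : h1 = h2) by apply proof_irrelevance. subst h2.
    apply inj_pair2, flatten_stalk_inj in Heq. subst p2. reflexivity.
  - intro c. destruct (proj2 (HC2 V x) (flatten_germ c)) as [[[y hy] phi] E]. simpl in E.
    exists (existT (fun y0 : {y0 : X | V y0} => stalk_lim Chat x (proj1_sig y0)) (exist _ y hy) (lift_stalk phi)).
    simpl. apply flatten_germ_inj. rewrite <- E. exact (flatten_lift_germ (comp_of phi hy)).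
Qed.

Lemma lift_stalk_is_id {x : X} (ix : stalk_lim C x x) : is_id ix -> is_id (lift_stalk ix).
Proof.
  intros H W hx. apply flatten_germ_inj. rewrite flatten_germ_of. simpl.
  change (flatten_germ (lift_germ (comp_of ix hx)) = germ_of hx (idm C W)).
  rewrite flatten_lift_germ. apply H.
Qed.

Lemma comp_rel_of_flatten {x y z : X} (ps : stalk_lim Chat y z) (ph : stalk_lim Chat x y)
  (ch : stalk_lim Chat x z) :
  comp_rel (flatten_stalk ps) (flatten_stalk ph) (flatten_stalk ch) -> comp_rel ps ph ch.
Proof.
  intros H W hz. destruct (H W hz) as [V [hy [g [U [hx [f [m1 [m2 e]]]]]]]].
  exists V, hy, (embed g : hom Chat V W), U, hx, (embed f : hom Chat U V).
  apply germ_mem_iff in m1. apply germ_mem_iff in m2.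
  split; [|split].
  - apply germ_mem_iff. apply flatten_germ_inj. rewrite flatten_germ_of. exact m1.
  - apply germ_mem_iff. apply flatten_germ_inj. rewrite flatten_germ_of. exact m2.
  - apply flatten_germ_inj. rewrite flatten_germ_of. simpl. rewrite act_embed. exact e.
Qed.

(* (3) for Chat: Chat^* is isomorphic to the groupoid C^*. *)
Lemma Chat_cond3 : cond3 C -> cond3 Chat.
Proof.
  intros HC3 x y ph. destruct (HC3 x y (flatten_stalk ph)) as [ps [ix [iy [Hx [Hy [H1 H2]]]]]].
  exists (lift_stalk ps), (lift_stalk ix), (lift_stalk iy).
  split; [apply lift_stalk_is_id; exact Hx|]. split; [apply lift_stalk_is_id; exact Hy|].
  split; apply comp_rel_of_flatten; rewrite !flatten_lift_stalk; assumption.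
Qed.

(* (4) for Chat: compatible locally represented families glue pointwise. *)
Lemma Chat_cond4 : cond4 Chat.
Proof.
  intros V U I Ui hsub hcov f Hc.
  pose (g := fun x (hx : U x) =>
    let (i, hi) := constructive_indefinite_description _ (hcov x hx) in
    proj1_sig (f i : hat_hom (Ui i) V) x hi).
  assert (Hg : forall x (hx : U x) i (hi : Ui i x), g x hx = proj1_sig (f i : hat_hom (Ui i) V) x hi).
  { intros x hx i hi. unfold g. destruct (constructive_indefinite_description _ (hcov x hx)) as [j hj].
    assert (E := f_equal (fun s : hat_hom (ointer (Ui j) (Ui i)) V => proj1_sig s x (conj hj hi)) (Hc j i)).
    simpl in E. rewrite (act_incl (f j) _ _ hj), (act_incl (f i) _ _ hi) in E. exact E. }
  assert (Hloc : locally_represented g).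
  { intros x hx. destruct (hcov x hx) as [i hi].
    destruct (proj2_sig (f i : hat_hom (Ui i) V) x hi) as [U' [hx' [f1 [hs hr]]]].
    exists U', hx', f1. split; [intros z hz; exact (hsub i z (hs z hz))|].
    intros z hz hz'. rewrite (Hg z hz' i (hs z hz)). apply hr. }
  exists (exist _ g Hloc : hom Chat U V). split.
  - intro i. apply hat_hom_ext; intros z hz. simpl.
    rewrite (act_incl _ _ _ (hsub i z hz)). simpl. apply Hg.
  - intros g' Hg'. apply hat_hom_ext; intros z hz. simpl. destruct (hcov z hz) as [i hi].
    rewrite (Hg z hz i hi), <- (Hg' i). simpl. rewrite (act_incl g' _ hi hz). reflexivity.
Qed.

Lemma Chat_pseudogroup_sheaf : cond3 C -> pseudogroup_sheaf Chat.
Proof. intro HC3. split; [split|]; [exact Chat_cond2 | exact (Chat_cond3 HC3) | exact Chat_cond4]. Qed.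

Section UniversalProperty.
Context (D : PreCat T) (HD4 : cond4 D) (F : PPMor C D).

Lemma sheaf_local_eq {Q V : Opens T} (a b : hom D Q V) :
  (forall x, Q x -> exists (W : Opens T) (hW : sub W Q),
     W x /\ comp D a (incl D hW) = comp D b (incl D hW)) ->
  a = b.
Proof.
  intro H.
  pose (I := {W : Opens T | exists hW : sub W Q, comp D a (incl D hW) = comp D b (incl D hW)}).
  pose (Ui := fun i : I => proj1_sig i).
  assert (hsub : forall i, sub (Ui i) Q). { intro i. destruct (proj2_sig i) as [hW _]. exact hW. }
  assert (hcov : forall x, Q x -> exists i, Ui i x).
  { intros x hx. destruct (H x hx) as [W [hW [hxW e]]]. exists (exist _ W (ex_intro _ hW e)). exact hxW. }
  destruct (HD4 V Q I Ui hsub hcov (fun i => comp D a (incl D (hsub i)))) as [g [Hg Hu]].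
  - intros i j.
    rewrite (comp_incl_incl a (hsub i) _ (fun z (hz : ointer (Ui i) (Ui j) z) => hsub i z (proj1 hz))).
    rewrite (comp_incl_incl a (hsub j) _ (fun z (hz : ointer (Ui i) (Ui j) z) => hsub i z (proj1 hz))).
    reflexivity.
  - rewrite (Hu a (fun i => eq_refl)). symmetry. apply Hu. intros [W [hW e]].
    rewrite (incl_irrel (hsub (exist _ W (ex_intro _ hW e))) hW). symmetry; exact e.
Qed.

(* The local representatives of a morphism s of Chat, indexing the cover on
   which F applied to them is glued. *)
Definition rep_index {U V : Opens T} (s : hat_hom U V) : Type :=
  {d : {U' : Opens T & hom C U' V} | sub (projT1 d) U /\ represents (proj1_sig s) (projT2 d)}.

(* The images under F of the local representatives of s are compatible (two
   representatives agree near each point, hence so do their images), so they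
   glue uniquely in D. *)
Lemma extension_exists {U V : Opens T} (s : hat_hom U V) :
  exists g : hom D U V,
    (forall i : rep_index s,
       comp D g (incl D (proj1 (proj2_sig i))) = fmap F (projT2 (proj1_sig i))) /\
    (forall g', (forall i : rep_index s,
       comp D g' (incl D (proj1 (proj2_sig i))) = fmap F (projT2 (proj1_sig i))) -> g' = g).
Proof.
  apply (HD4 V U (rep_index s) (fun i => projT1 (proj1_sig i)) (fun i => proj1 (proj2_sig i))).
  - intros x hx. destruct (proj2_sig s x hx) as [U' [hx' [f [hs hr]]]].
    exists (exist _ (existT _ U' f) (conj hs hr)). exact hx'.
  - intros [[Ui fi] [hsi hri]] [[Uj fj] [hsj hrj]]. simpl in *.
    apply sheaf_local_eq. intros z [hzi hzj].
    assert (G : germ_of hzi fi = germ_of hzj fj).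
    { rewrite <- (hri z hzi (hsi z hzi)), <- (hrj z hzj (hsi z hzi)). reflexivity. }
    apply germ_rel_of_eq in G. destruct G as [W [hzW [a1 [b1 e]]]].
    unfold rmap, rdom, mkrep in *; simpl in *.
    exists W, (fun w hw => conj (a1 w hw) (b1 w hw)). split; [exact hzW|].
    rewrite (comp_incl_incl (fmap F fi) _ _ a1), (comp_incl_incl (fmap F fj) _ _ b1).
    rewrite <- !(fmap_incl F), <- !(fmap_comp F), e. reflexivity.
Qed.

Definition extend {U V : Opens T} (s : hat_hom U V) : hom D U V :=
  proj1_sig (constructive_indefinite_description _ (extension_exists s)).

Lemma extend_spec {U V U' : Opens T} (s : hat_hom U V) (hs : sub U' U) (f : hom C U' V) :
  represents (proj1_sig s) f -> comp D (extend s) (incl D hs) = fmap F f.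
Proof.
  intro r. unfold extend.
  destruct (constructive_indefinite_description _ (extension_exists s)) as [g Hgp]. simpl.
  destruct Hgp as [Hg _]. pose proof (Hg (exist _ (existT _ U' f) (conj hs r))) as K. simpl in K.
  rewrite (incl_irrel hs (proj1 (conj hs r))). exact K.
Qed.

Lemma extend_unique {U V : Opens T} (s : hat_hom U V) (d : hom D U V) :
  (forall (U' : Opens T) (hs : sub U' U) (f : hom C U' V),
     represents (proj1_sig s) f -> comp D d (incl D hs) = fmap F f) ->
  d = extend s.
Proof.
  intro H. unfold extend.
  destruct (constructive_indefinite_description _ (extension_exists s)) as [g Hgp]. simpl.
  destruct Hgp as [_ Hu]. apply Hu. intros [[U' f] [hs r]]. simpl. apply H, r.
Qed.

Lemma extend_embed {U V : Opens T} (f : hom C U V) : extend (embed f) = fmap F f.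
Proof.
  rewrite <- (comp_incl_refl_r (extend (embed f)) (sub_refl U)). apply extend_spec.
  intros z hz hz'. apply germ_of_irrel.
Qed.

(* Functoriality of the extension, checked locally near each point where both
   composites are represented by a composite of morphisms of C. *)
Lemma extend_comp {U V W : Opens T} (s : hat_hom V W) (t : hat_hom U V) :
  extend (hat_comp s t) = comp D (extend s) (extend t).
Proof.
  apply sheaf_local_eq. intros x hx.
  destruct (hat_comp_local s t x hx)
    as [Q [hxQ [hQ [U1 [hU1 [f1 [hQ1 [V' [hV [f [g [r1 [r2 [e H]]]]]]]]]]]]]].
  exists Q, hQ. split; [exact hxQ|].
  rewrite (extend_spec (hat_comp s t) hQ (comp C g f)).
  2: { intros z hz hz'. apply H. }
  rewrite <- comp_assoc, <- (comp_incl_incl (extend t) hU1 hQ1 hQ), (extend_spec t hU1 f1 r1),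
    <- (fmap_incl F), <- (fmap_comp F), <- e, (fmap_comp F (incl C hV) f), comp_assoc,
    (fmap_incl F), (extend_spec s hV g r2), <- (fmap_comp F).
  reflexivity.
Qed.

Definition extend_mor : PPMor Chat D := {|
  fmap := fun (U V : Opens T) (s : hom Chat U V) => extend (s : hat_hom U V);
  fmap_comp := fun U V W g f => extend_comp g f;
  fmap_id := fun U => eq_trans (extend_embed (idm C U)) (fmap_id F U);
  fmap_incl := fun U V h => eq_trans (extend_embed (incl C h)) (fmap_incl F h)
|}.

(* Any morphism G' : Chat -> D extending F agrees with the extension: on a
   local representative f of s, G' s restricts to G' (embed f) = F f. *)
Lemma extend_mor_unique (G' : PPMor Chat D) :
  (forall (U V : Opens T) (f : hom C U V), fmap G' (fmap embed_mor f) = fmap F f) ->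
  forall (U V : Opens T) (g : hom Chat U V), fmap G' g = extend g.
Proof.
  intros H U V g. apply extend_unique. intros U' hs f r.
  rewrite <- (fmap_incl G' hs), <- (fmap_comp G').
  assert (E : comp Chat g (incl Chat hs) = (embed f : hom Chat U' V)).
  { apply hat_hom_ext; intros z hz. simpl. rewrite (act_incl g hs hz (hs z hz)). apply r. }
  rewrite E. exact (H U' V f).
Qed.

End UniversalProperty.

End Sheafification.

Theorem mainTheorem7 (X : Type) (T : topology X) (HT1 : T1 T)
    (C : PreCat T) (HC : pre_pseudogroup C) :
  exists (Ch : PreCat T) (eta : PPMor C Ch),
    pseudogroup_sheaf Ch /\
    forall (D : PreCat T), pseudogroup_sheaf D ->
    forall F : PPMor C D,
      exists G : PPMor Ch D,
        (forall U V (f : hom C U V), fmap G (fmap eta f) = fmap F f) /\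
        (forall G' : PPMor Ch D,
           (forall U V (f : hom C U V), fmap G' (fmap eta f) = fmap F f) ->
           forall U V (g : hom Ch U V), fmap G' g = fmap G g).
Proof.
  destruct HC as [HC2 HC3].
  exists (Chat C HC2), (embed_mor C HC2).
  split; [exact (Chat_pseudogroup_sheaf C HC2 HC3)|].
  intros D [_ HD4] F. exists (extend_mor C HC2 D HD4 F). split.
  - intros U V f. exact (extend_embed C D HD4 F f).
  - intros G' HG' U V g. exact (extend_mor_unique C HC2 D HD4 F G' HG' U V g).
Qed.
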